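(* Let $A\in \mathbb{Z}^{m\times n}$ be a matrix of rank $r$ and $p$ a prime. The following are equivalent: (1) the columns of $A$ form a $p$-adic generating set for a subspace; (2) the rows of $A$ form a $p$-adic generating set for a subspace; (3) for all real vectors $x,y$, whenever $y^\top A$ and $Ax$ are integral, $y^\top Ax$ is a $p$-adic rational; (4) every elementary divisor of $A$ is a power of $p$; (5) the GCD of the subdeterminants of $A$ of order $r$ is a power of $p$; (6) there exists a matrix $B$ with $p$-adic entries such that $ABA=A$.
   Context: A $p$-adic rational is a number $a/p^k$ with $a,k\in\mathbb{Z}$, $k\ge0$; a vector or matrix is $p$-adic if all entries are $p$-adic rationals. A finite set $S$ of integral vectors is a $p$-adic generating set for a subspace if every integral vector in the linear hull of $S$ is a linear combination of the elements of $S$ with $p$-adic coefficients. The elementary divisors (invariant factors) of an integral matrix of rank $r$ are the nonzero diagonal entries $\delta_1\mid\delta_2\mid\cdots\mid\delta_r$ ($\delta_i\ge1$) of its Smith normal form. *)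

From HB Require Import structures.
From mathcomp Require Import all_boot all_order all_algebra.
From mathcomp Require Import reals.
Set Implicit Arguments. Unset Strict Implicit. Unset Printing Implicit Defensive.
Import Order.TTheory GRing.Theory Num.Theory.
Local Open Scope ring_scope.

Definition padic {F : numFieldType} (p : nat) (x : F) : Prop :=
  exists (a : int) (k : nat), x = a%:~R / (p ^ k)%:R.

Definition integral {F : numFieldType} (x : F) : Prop := exists z : int, x = z%:~R.

Definition mxF {F : numFieldType} {m n} (A : 'M[int]_(m, n)) : 'M[F]_(m, n) :=
  map_mx (fun z : int => z%:~R) A.

Definition cols_padic_generating (p : nat) {m n} (A : 'M[int]_(m, n)) : Prop :=
  forall v : 'cV[int]_m,
    (exists c : 'cV[rat]_n, mxF A *m c = mxF v) ->
    exists c : 'cV[rat]_n, (forall j, padic p (c j 0)) /\ mxF A *m c = mxF v.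

Definition int_rank {m n} (A : 'M[int]_(m, n)) : nat := \rank (mxF A : 'M[rat]_(m, n)).

(* The elementary divisors of A are the nonzero entries of d. *)
Definition Smith_decomp {m n} (A : 'M[int]_(m, n))
    (L : 'M[int]_m) (R : 'M[int]_n) (d : seq int) : Prop :=
  [/\ L \in unitmx, R \in unitmx, size d = minn m n,
      all (fun x => 0 <= x) d & sorted dvdz d] /\
  A = L *m (\matrix_(i, j) (d`_i *+ (i == j :> nat))) *m R.

(* gcd of all minors of order r (rows and columns selected by maps;
   non-injective selections give zero or repeated minors up to sign,
   which do not change the gcd) *)
Definition gcd_minors {m n} (A : 'M[int]_(m, n)) (r : nat) : int :=
  \big[gcdz/0]_(f : {ffun 'I_r -> 'I_m})
    \big[gcdz/0]_(g : {ffun 'I_r -> 'I_n}) \det (mxsub f g A).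

(* Fix a Smith decomposition A = L D R, with L and R unimodular and D diagonal
   with entries d_1 | d_2 | ...; every condition can be read off the nonzero d_i.
   The system A x = L e_i has the rational solution x = R^-1 e_i / d_i, and for
   any p-adic solution c the i-th entry of R c is 1 / d_i: so (1) forces every
   d_i to be a power of p, and the pair x, y = L^-T e_i / d_i does the same for
   (3). Conversely, if the d_i are powers of p, then R^-1 D^+ L^-1 is a p-adic
   generalized inverse, which yields (1), (3) and, transposed, (2). For (5),
   reduce modulo a prime q: the rank of A over F_q is the number of d_i not
   divisible by q, and q divides the gcd of the r-minors exactly when this rank
   drops below r. *)

From HB Require Import structures.
From mathcomp Require Import all_boot all_order all_algebra.
From mathcomp Require Import reals.
From mathcomp Require Import ring.
Import Order.TTheory GRing.Theory Num.Theory.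
Local Open Scope ring_scope.
Set Implicit Arguments. Unset Strict Implicit. Unset Printing Implicit Defensive.

Section Padic.
Variables (F : numFieldType) (p : nat).
Hypothesis p_prime : prime p.

Lemma padic_int (z : int) : padic p (z%:~R : F).
Proof. by exists z, 0%N; rewrite expn0 divr1. Qed.

Lemma padic0 : padic p (0 : F).
Proof. exact: (padic_int 0). Qed.

Lemma expn_prime_neq0 k : ((p ^ k)%:R : F) != 0.
Proof. by rewrite pnatr_eq0 -lt0n expn_gt0 prime_gt0. Qed.

Lemma padicD (x y : F) : padic p x -> padic p y -> padic p (x + y).
Proof.
move=> [a [k ->]] [b [l ->]].
exists (a * (p ^ l)%:Z + b * (p ^ k)%:Z), (k + l)%N.
have := expn_prime_neq0 k; have := expn_prime_neq0 l.
rewrite expnD natrM rmorphD /= !rmorphM /= !pmulrn => hl hk.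
by field; rewrite hk hl.
Qed.

Lemma padicM (x y : F) : padic p x -> padic p y -> padic p (x * y).
Proof.
move=> [a [k ->]] [b [l ->]]; exists (a * b), (k + l)%N.
have := expn_prime_neq0 k; have := expn_prime_neq0 l.
rewrite expnD natrM rmorphM /= => hl hk.
by field; rewrite hk hl.
Qed.

Lemma padic_sum I (r : seq I) (P : pred I) (G : I -> F) :
  (forall i, P i -> padic p (G i)) -> padic p (\sum_(i <- r | P i) G i).
Proof.
move=> padicG; elim/big_rec: _ => [|i x Pi]; first exact: padic0.
exact: padicD (padicG _ Pi).
Qed.

Lemma padic_mulmx k l q (X : 'M[F]_(k, l)) (Y : 'M[F]_(l, q)) :
  (forall i j, padic p (X i j)) -> (forall i j, padic p (Y i j)) ->
  forall i j, padic p ((X *m Y) i j).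
Proof.
move=> padicX padicY i j; rewrite mxE; apply: padic_sum => h _.
exact: padicM.
Qed.

Lemma padic_invz (z : int) :
  0 < z -> padic p ((z%:~R : F)^-1) <-> exists k : nat, z = (p ^ k)%:Z.
Proof.
move=> z_gt0; split=> [[a [k def_zV]] | [k ->]]; last first.
  by exists 1, k; rewrite mul1r pmulrn.
have zF_neq0 : (z%:~R : F) != 0 by rewrite intr_eq0 gt_eqF.
have z_dvd : (z %| (p ^ k)%:Z)%Z.
  apply/dvdzP; exists a; apply: (@intr_inj F); rewrite rmorphM /= -pmulrn.
  have pk_neq0 := expn_prime_neq0 k.
  have := congr1 (fun x => x * z%:~R * (p ^ k)%:R) def_zV.
  by rewrite mulVf // mul1r => ->; field.
have /(dvdn_pfactor _ _ p_prime) [j _ abs_z] : (`|z| %| p ^ k)%N := z_dvd.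
by exists j; rewrite -abs_z gtz0_abs.
Qed.

End Padic.

Lemma padic_ratr (F : numFieldType) p (x : rat) : padic p x -> padic p (ratr x : F).
Proof. by move=> [a [k ->]]; exists a, k; rewrite fmorph_div /= rmorph_int rmorph_nat. Qed.

Definition rect_diag_mx (R : nmodType) m n (e : nat -> R) : 'M[R]_(m, n) :=
  \matrix_(i, j) (e i *+ (i == j :> nat)).

Lemma rect_diag_mx_tr (R : nmodType) m n (e : nat -> R) :
  (rect_diag_mx m n e)^T = rect_diag_mx n m e.
Proof.
apply/matrixP => i j; rewrite !mxE eq_sym.
by case: eqP => [-> | _]; rewrite ?mulr0n.
Qed.

Lemma map_rect_diag_mx (R S : nmodType) (f : {additive R -> S}) m n (e : nat -> R) :
  map_mx f (rect_diag_mx m n e) = rect_diag_mx m n (f \o e).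
Proof. by apply/matrixP => i j; rewrite !mxE raddfMn. Qed.

Section RectDiagRing.
Variables (R : comPzRingType) (e : nat -> R).

Lemma rect_diag_mx_delta_col m n (i : 'I_m) (j : 'I_n) : i = j :> nat ->
  rect_diag_mx m n e *m delta_mx j 0 = e i *: delta_mx i (0 : 'I_1).
Proof.
move=> eq_ij; rewrite -colE; apply/matrixP => a b.
rewrite !mxE (ord1 b) eqxx andbT.
have [-> | ne_ai] := eqVneq a i; first by rewrite eq_ij eqxx mulr1.
have /negPf -> : a != j :> nat by rewrite -eq_ij.
by rewrite mulr0 mulr0n.
Qed.

Lemma rect_diag_mx_delta_row m n (i : 'I_m) (j : 'I_n) : i = j :> nat ->
  delta_mx 0 i *m rect_diag_mx m n e = e i *: delta_mx (0 : 'I_1) j.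
Proof.
move=> eq_ij; apply: trmx_inj.
rewrite trmx_mul !trmx_delta rect_diag_mx_tr linearZ /= trmx_delta eq_ij.
exact: rect_diag_mx_delta_col (esym eq_ij).
Qed.

Lemma rect_diag_mxM m n k (f : nat -> R) :
  rect_diag_mx m n e *m rect_diag_mx n k f =
  rect_diag_mx m k (fun i => if (i < n)%N then e i * f i else 0).
Proof.
apply/matrixP => i l; rewrite !mxE; case: ifP => [lt_in | ge_in].
  rewrite (bigD1 (Ordinal lt_in)) //= big1 ?addr0 => [|j ne_ji].
    by rewrite !mxE eqxx mulr1n mulrnAr.
  have /negPf ne_ij : i != j :> nat by rewrite eq_sym; exact: ne_ji.
  by rewrite !mxE ne_ij mulr0n mul0r.
rewrite mul0rn big1 // => j _; rewrite !mxE.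
have -> : (i == j :> nat) = false by apply: contraFF ge_in => /eqP ->.
by rewrite mulr0n mul0r.
Qed.

End RectDiagRing.

Lemma rect_diag_mx_ginv (F : fieldType) m n (e : nat -> F) :
  rect_diag_mx m n e *m rect_diag_mx n m (fun i => (e i)^-1) *m rect_diag_mx m n e =
  rect_diag_mx m n e.
Proof.
rewrite !rect_diag_mxM; apply/matrixP => i j; rewrite !mxE ltn_ord.
case: eqP => [eq_ij | _]; last by rewrite !mulr0n.
rewrite eq_ij ltn_ord; have [-> | e_neq0] := eqVneq (e j) 0; first by rewrite mulr0.
by rewrite mulfV // mul1r.
Qed.

Lemma rank_rect_diag_mx (F : fieldType) m n (e : nat -> F) s :
  (s <= minn m n)%N -> (forall i, (i < s)%N = (e i != 0)) ->
  \rank (rect_diag_mx m n e) = s.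
Proof.
move=> le_s_mn nz_e; rewrite leq_min in le_s_mn; case/andP: le_s_mn => le_sm le_sn.
pose u : 'rV[F]_n := \row_j (if (j < s)%N then e j else 1).
have -> : rect_diag_mx m n e = pid_mx s *m diag_mx u.
  apply/matrixP => i j; rewrite mul_mx_diag !mxE.
  case: eqP => [eq_ij | _]; last by rewrite mulr0n mul0r.
  rewrite mulr1n -eq_ij nz_e; case: eqP => [-> | _]; rewrite ?mul1r ?mul0r //.
rewrite mxrankMfree ?rank_pid_mx // row_free_unit unitmxE det_diag unitfE.
rewrite prodf_seq_neq0; apply/allP => j _; rewrite mxE.
by case: ifP => [| _]; rewrite ?oner_neq0 // nz_e.
Qed.

Section Minors.
Variables (F : fieldType) (m n : nat) (M : 'M[F]_(m, n)).

Lemma minor_neq0_rank k (f : 'I_k -> 'I_m) (g : 'I_k -> 'I_n) :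
  \det (mxsub f g M) != 0 -> (k <= \rank M)%N.
Proof.
rewrite -unitfE -unitmxE => /mxrank_unit <-; rewrite mxsubrc.
apply: leq_trans (mxrankS (rowsub_sub _ _)) _.
by rewrite -[M in colsub _ M]mulmx1 -mulmx_colsub mxrankM_maxl.
Qed.

Lemma rank_minor_neq0 :
  exists f : 'I_(\rank M) -> 'I_m, exists g : 'I_(\rank M) -> 'I_n, \det (mxsub f g M) != 0.
Proof.
pose B := rowsub (maxrankfun M) M.
have fullBT : row_full B^T by rewrite /row_full mxrank_tr; apply: maxrowsub_free.
exists (maxrankfun M), (fullrankfun fullBT).
rewrite -unitfE -unitmxE mxsubcr -/B -unitmx_tr trmx_mxsub.
exact: fullrowsub_unit.
Qed.

End Minors.

Definition intmx (R : pzRingType) m n (A : 'M[int]_(m, n)) : 'M[R]_(m, n) :=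
  map_mx (fun z : int => z%:~R) A.

Section IntMatrix.
Variable R : comUnitRingType.

Lemma intmxM m n k (A : 'M[int]_(m, n)) (B : 'M[int]_(n, k)) :
  intmx R (A *m B) = intmx R A *m intmx R B.
Proof. exact: map_mxM. Qed.

Lemma intmx_tr m n (A : 'M[int]_(m, n)) : intmx R A^T = (intmx R A)^T.
Proof. by rewrite /intmx map_trmx. Qed.

Lemma det_mxsub_intmx m n k (A : 'M[int]_(m, n)) (f : 'I_k -> 'I_m) (g : 'I_k -> 'I_n) :
  \det (mxsub f g (intmx R A)) = (\det (mxsub f g A))%:~R.
Proof. by rewrite -map_mxsub det_map_mx. Qed.

Lemma intmx_unit n (U : 'M[int]_n) : U \in unitmx -> intmx R U \in unitmx.
Proof. by rewrite !unitmxE det_map_mx; apply: rmorph_unit. Qed.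

Lemma intmx_invmx n (U : 'M[int]_n) : U \in unitmx -> invmx (intmx R U) = intmx R (invmx U).
Proof.
move=> unitU; have unitUR := intmx_unit unitU.
have invUR : intmx R (invmx U) *m intmx R U = 1%:M by rewrite -intmxM mulVmx // /intmx map_mx1.
by rewrite -[invmx _]mul1mx -invUR -mulmxA mulmxV ?mulmx1.
Qed.

End IntMatrix.

Lemma dvdz_big_gcdzP (I : finType) (G : I -> int) (q : int) :
  reflect (forall i, (q %| G i)%Z) (q %| \big[gcdz/0]_i G i)%Z.
Proof.
rewrite (big_morph (fun x => (q %| x)%Z) (dvdz_gcd q) (dvdz0 q)) big_andE.
exact: forallP.
Qed.

Section GcdMinors.
Variables (m n : nat) (A : 'M[int]_(m, n)).

Lemma dvdz_gcd_minorsP k (q : int) :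
  reflect (forall (f : 'I_k -> 'I_m) (g : 'I_k -> 'I_n), (q %| \det (mxsub f g A))%Z)
          (q %| gcd_minors A k)%Z.
Proof.
apply: (iffP (dvdz_big_gcdzP _ _)) => [dvd_q f g | dvd_q f].
  by have /dvdz_big_gcdzP/(_ [ffun x => g x]) := dvd_q [ffun x => f x]; rewrite mxsub_ffun.
by apply/dvdz_big_gcdzP => g; apply: dvd_q.
Qed.

Lemma gcd_minors_gt0 : 0 < gcd_minors A (int_rank A).
Proof.
have [f [g]] := rank_minor_neq0 (intmx rat A).
rewrite det_mxsub_intmx intr_eq0 => minor_neq0.
rewrite lt_def; apply/andP; split.
  apply: contra minor_neq0 => /eqP gcd0.
  by have /dvdz_gcd_minorsP/(_ f g) := dvdzz (gcd_minors A (int_rank A)); rewrite gcd0 dvd0z.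
by rewrite /gcd_minors; elim/big_rec: _.
Qed.

Lemma rank_intmx_le (F : fieldType) : (\rank (intmx F A) <= int_rank A)%N.
Proof.
have [f [g]] := rank_minor_neq0 (intmx F A).
rewrite det_mxsub_intmx => minorF_neq0.
apply: (@minor_neq0_rank _ _ _ _ _ f g); rewrite det_mxsub_intmx intr_eq0.
by apply: contraNneq minorF_neq0 => ->.
Qed.

Lemma prime_dvd_gcd_minors q : prime q ->
  (q %| gcd_minors A (int_rank A))%Z = (\rank (intmx 'F_q A) < int_rank A)%N.
Proof.
move=> q_prime; have dvd_qE := dvdz_pcharf (pchar_Fp q_prime).
rewrite ltn_neqAle rank_intmx_le andbT; apply/idP/idP => [dvd_q | lt_rank].
  apply/eqP => rank_eq; have [] := rank_minor_neq0 (intmx 'F_q A).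
  rewrite rank_eq => f [g]; rewrite det_mxsub_intmx -dvd_qE.
  by move/dvdz_gcd_minorsP: dvd_q => ->.
apply/dvdz_gcd_minorsP => f g; rewrite dvd_qE -det_mxsub_intmx.
apply: contraNT lt_rank => /minor_neq0_rank le_rank.
by rewrite eqn_leq le_rank rank_intmx_le.
Qed.

End GcdMinors.

Lemma sorted_dvdz_nth (s : seq int) : sorted dvdz s ->
  forall i j, (i <= j)%N -> (s`_i %| s`_j)%Z.
Proof.
move=> sorted_s i j le_ij; have [lt_js | ge_js] := ltnP j (size s).
  by apply: (sorted_leq_nth dvdz_trans dvdzz) => //; rewrite inE (leq_ltn_trans le_ij).
by rewrite (nth_default 0 ge_js) dvdz0.
Qed.

(* In a divisibility chain, the entries satisfying a predicate closed under
   multiples form a final segment. *)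
Lemma sorted_dvdz_find (a : pred int) (s : seq int) :
  sorted dvdz s -> a 0 -> (forall x y, (x %| y)%Z -> a x -> a y) ->
  forall i, (i < find a s)%N = ~~ a s`_i.
Proof.
move=> sorted_s a0 a_dvd i; case: ltnP => [lt_i | ge_i]; first by rewrite before_find.
suff -> : a s`_i by [].
apply: (a_dvd _ _ (sorted_dvdz_nth sorted_s ge_i)).
have [has_a | no_a] := boolP (has a s); first exact: nth_find.
by rewrite nth_default // leqNgt -has_find.
Qed.

Lemma sorted_dvdz_find_dvd (s : seq int) (q : int) : sorted dvdz s ->
  (find (fun x : int => x == 0) s <= find (fun x => q %| x)%Z s)%N <->
  (forall x, x \in s -> x != 0 -> ~~ (q %| x)%Z).
Proof.
move=> sorted_s.
have dvd_eq0 (x y : int) : (x %| y)%Z -> x == 0 -> y == 0.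
  by move=> + /eqP x0; rewrite x0 dvd0z.
have prefix0 := sorted_dvdz_find (a := fun x : int => x == 0) sorted_s (eqxx 0) dvd_eq0.
have prefixq := sorted_dvdz_find (a := fun x => (q %| x)%Z) sorted_s (dvdz0 q)
  (fun x y x_dvd q_dvd => dvdz_trans q_dvd x_dvd).
split=> [le_find x /(nthP 0) [i _ <-] nz_x | coprime_q].
  by rewrite -prefixq (leq_trans _ le_find) // prefix0.
rewrite (@eq_in_find _ (fun x => (q %| x)%Z) (fun x : int => x == 0)) // => x x_in /=.
by have [-> | /(coprime_q x x_in) /negPf //] := eqVneq x 0; rewrite dvdz0.
Qed.

Lemma int_ppowP (p : nat) (z : int) : prime p -> 0 < z ->
  (exists k : nat, z = (p ^ k)%:Z) <-> (forall q, prime q -> q != p -> ~~ (q%:Z %| z)%Z).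
Proof.
move=> p_prime z_gt0; split=> [[k ->] q q_prime | coprime_z].
  by apply: contra; rewrite unfold_in /= Euclid_dvdX // dvdn_prime2 // => /andP[].
have /p_natP [k abs_z] : p.-nat `|z|%N.
  apply/pnatP => [|q q_prime q_dvd]; first by rewrite absz_gt0 gt_eqF.
  by rewrite inE; apply: contraTT q_dvd => ne_qp; apply: coprime_z.
by exists k; rewrite -abs_z gtz0_abs.
Qed.

Lemma mxFE (F : numFieldType) m n (A : 'M[int]_(m, n)) : mxF A = intmx F A.
Proof. by []. Qed.

Definition ppow_factors (p : nat) (d : seq int) : Prop :=
  forall delta, delta \in d -> delta != 0 -> exists k : nat, delta = (p ^ k)%:Z.

Definition padic_ginverse (p : nat) m n (A : 'M[int]_(m, n)) (B : 'M[rat]_(n, m)) : Prop :=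
  (forall i j, padic p (B i j)) /\ mxF A *m B *m mxF A = mxF A.

Definition padic_on_integral_pairs (F : numFieldType) (p : nat) m n (A : 'M[int]_(m, n)) :=
  forall (x : 'cV[F]_n) (y : 'cV[F]_m),
    (forall j, integral ((y^T *m mxF A) 0 j)) -> (forall i, integral ((mxF A *m x) i 0)) ->
    padic p ((y^T *m mxF A *m x) 0 0).

Lemma Smith_decomp_exists m n (A : 'M[int]_(m, n)) : exists L R d, Smith_decomp A L R d.
Proof.
have [L0 unitL0 [R unitR [d0 sorted_d0 defA]]] := int_Smith_normal_form A.
(* Take absolute values, absorbing the signs into [L] through [S], and pad or
   truncate to length [minn m n]. *)
pose d := mkseq (fun i => `|d0`_i|%:Z) (minn m n).
pose S : 'M[int]_m := diag_mx (\row_i (-1) ^+ (d0`_i < 0)%R).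
have unitS : S \in unitmx.
  rewrite unitmxE det_diag; apply: (big_ind (fun x : int => x \is a GRing.unit)) => //.
  - by move=> x y unit_x unit_y; rewrite unitrM unit_x unit_y.
  - by move=> i _; rewrite mxE unitrX // unitrN1.
exists (L0 *m S), R, d; split; first split.
- by rewrite unitmx_mul unitL0 unitS.
- exact: unitR.
- exact: size_mkseq.
- by apply/allP => _ /mapP [i _ ->].
- rewrite /d /mkseq sorted_map; apply: sub_sorted (iota_ltn_sorted 0 _) => i j lt_ij.
  exact: (sorted_dvdz_nth sorted_d0 (ltnW lt_ij)).
rewrite defA -!mulmxA; congr (_ *m _); rewrite !mulmxA; congr (_ *m _).
apply/matrixP => i j; rewrite mul_diag_mx !mxE.
case: eqP => [eq_ij | _]; last by rewrite !mulr0n mulr0.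
rewrite nth_mkseq; last by rewrite leq_min ltn_ord eq_ij ltn_ord.
by rewrite -intEsign.
Qed.

Lemma Smith_decomp_tr m n (A : 'M[int]_(m, n)) L R d :
  Smith_decomp A L R d -> Smith_decomp A^T R^T L^T d.
Proof.
case=> [[unitL unitR size_d d_ge0 sorted_d] defA]; split.
  by split; rewrite ?unitmx_tr // minnC.
by rewrite defA !trmx_mul mulmxA (rect_diag_mx_tr m n (nth 0 d)).
Qed.

Section SmithDecomposition.
Variables (m n : nat) (A : 'M[int]_(m, n)) (L : 'M[int]_m) (R : 'M[int]_n) (d : seq int).
Hypothesis smithA : Smith_decomp A L R d.

Let unitL : L \in unitmx. Proof. by case: smithA => [[]]. Qed.
Let unitR : R \in unitmx. Proof. by case: smithA => [[]]. Qed.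
Let defA : A = L *m rect_diag_mx m n (nth 0 d) *m R. Proof. by case: smithA. Qed.

Lemma Smith_factor_index delta : delta \in d ->
  exists (i : 'I_m) (j : 'I_n), i = j :> nat /\ delta = d`_i.
Proof.
case: smithA => [[_ _ size_d _ _] _] /(nthP 0) [i]; rewrite size_d leq_min => /andP[lt_im lt_in] <-.
by exists (Ordinal lt_im), (Ordinal lt_in).
Qed.

Lemma Smith_factor_gt0 delta : delta \in d -> delta != 0 -> 0 < delta.
Proof. by case: smithA => [[_ _ _ /allP d_ge0 _] _] /d_ge0 /= ge0 nz; rewrite lt_def nz. Qed.

Lemma intmx_Smith (F : fieldType) :
  intmx F A = intmx F L *m rect_diag_mx m n (fun i => (d`_i)%:~R) *m intmx F R.
Proof. by rewrite defA !intmxM /intmx map_rect_diag_mx. Qed.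

Lemma Smith_solve_col (F : numFieldType) (i : 'I_m) (j : 'I_n) : i = j :> nat -> d`_i != 0 ->
  intmx F A *m (((d`_i)%:~R)^-1 *: (invmx (intmx F R) *m (delta_mx j 0 : 'cV_n))) =
  intmx F L *m (delta_mx i 0 : 'cV_m).
Proof.
move=> eq_ij nz_di; have unitRF := intmx_unit F unitR.
rewrite intmx_Smith -scalemxAr !mulmxA (mulmxK unitRF) -mulmxA.
by rewrite (rect_diag_mx_delta_col _ eq_ij) -scalemxAr scalerA mulVf ?scale1r // intr_eq0.
Qed.

Lemma Smith_solve_row (F : numFieldType) (i : 'I_m) (j : 'I_n) : i = j :> nat -> d`_i != 0 ->
  (((d`_i)%:~R)^-1 *: ((delta_mx 0 i : 'rV_m) *m invmx (intmx F L))) *m intmx F A =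
  (delta_mx 0 j : 'rV_n) *m intmx F R.
Proof.
move=> eq_ij nz_di; have unitLF := intmx_unit F unitL.
rewrite intmx_Smith -scalemxAl !mulmxA (mulmxKV unitLF).
by rewrite (rect_diag_mx_delta_row _ eq_ij) -scalemxAl scalerA mulVf ?scale1r // intr_eq0.
Qed.

Definition Smith_pinv (F : fieldType) : 'M[F]_(n, m) :=
  invmx (intmx F R) *m rect_diag_mx n m (fun i => ((d`_i)%:~R)^-1) *m invmx (intmx F L).

Lemma Smith_pinvK (F : fieldType) : intmx F A *m Smith_pinv F *m intmx F A = intmx F A.
Proof.
have unitLF := intmx_unit F unitL; have unitRF := intmx_unit F unitR.
rewrite /Smith_pinv intmx_Smith !mulmxA (mulmxK unitRF) (mulmxKV unitLF).
congr (_ *m _); rewrite -!mulmxA; congr (_ *m _).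
by rewrite mulmxA rect_diag_mx_ginv.
Qed.

Lemma padic_Smith_pinv p : prime p -> ppow_factors p d -> padic_ginverse p A (Smith_pinv rat).
Proof.
move=> p_prime ppow_d; split; last by rewrite !mxFE Smith_pinvK.
rewrite /Smith_pinv (intmx_invmx _ unitR) (intmx_invmx _ unitL).
apply: padic_mulmx => // [|a b]; last by rewrite mxE; apply: padic_int.
apply: padic_mulmx => // [a b|a b]; first by rewrite mxE; apply: padic_int.
rewrite mxE; case: eqP => _; last exact: padic0.
have [-> | nz_da] := eqVneq d`_a 0; first by rewrite invr0; exact: padic0.
have da_in : d`_a \in d.
  by apply: mem_nth; rewrite ltnNge; apply: contra nz_da => /(nth_default 0) ->.
exact/(padic_invz _ p_prime (Smith_factor_gt0 da_in nz_da))/ppow_d.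
Qed.

Lemma padic_generating_Smith_ppow p : prime p -> cols_padic_generating p A -> ppow_factors p d.
Proof.
move=> p_prime genA delta delta_in nz_delta.
apply/(padic_invz rat p_prime (Smith_factor_gt0 delta_in nz_delta)).
have [i [j [eq_ij def_delta]]] := Smith_factor_index delta_in.
rewrite def_delta in nz_delta *.
have colL : mxF (col i L) = mxF L *m delta_mx i 0 :> 'cV[rat]_m by rewrite /mxF map_col colE.
have [c [padic_c defAc]] : exists c : 'cV[rat]_n,
    (forall k, padic p (c k 0)) /\ mxF A *m c = mxF (col i L).
  apply: genA; exists (((d`_i)%:~R)^-1 *: (invmx (intmx rat R) *m (delta_mx j 0 : 'cV_n))).
  by rewrite colL !mxFE Smith_solve_col.
have := congr1 (mulmx (((d`_i)%:~R)^-1 *: ((delta_mx 0 i : 'rV_m) *m invmx (intmx rat L)))) defAc.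
rewrite mulmxA colL !mxFE (Smith_solve_row _ eq_ij nz_delta) -scalemxAl -mulmxA.
rewrite mulKmx ?intmx_unit // mul_delta_mx => /(congr1 (fun M : 'M[rat]_1 => M 0 0)).
rewrite [RHS]mxE [delta_mx _ _ _ _]mxE eqxx mulr1 => <-.
rewrite -rowE; apply: padic_mulmx => // [a b | a b]; first by rewrite !mxE; apply: padic_int.
by rewrite (ord1 b); apply: padic_c.
Qed.

Lemma padic_pairs_Smith_ppow (F : numFieldType) p : prime p ->
  padic_on_integral_pairs F p A -> ppow_factors p d.
Proof.
move=> p_prime pairsA delta delta_in nz_delta.
apply/(padic_invz F p_prime (Smith_factor_gt0 delta_in nz_delta)).
have [i [j [eq_ij def_delta]]] := Smith_factor_index delta_in.
rewrite def_delta in nz_delta *.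
pose x := ((d`_i)%:~R)^-1 *: (invmx (intmx F R) *m (delta_mx j 0 : 'cV_n)).
pose y := (((d`_i)%:~R)^-1 *: ((delta_mx 0 i : 'rV_m) *m invmx (intmx F L)))^T.
have := pairsA x y; rewrite !mxFE trmxK (Smith_solve_row _ eq_ij nz_delta) Smith_solve_col //.
rewrite /x -scalemxAr !mulmxA (mulmxK (intmx_unit F unitR)) mul_delta_mx.
rewrite [in padic _ _]mxE [delta_mx _ _ _ _]mxE eqxx mulr1.
by apply=> k; [rewrite -rowE | rewrite -colE]; rewrite !mxE; eexists.
Qed.

Lemma Smith_rank (F : fieldType) : \rank (intmx F A) = find (fun x : int => x%:~R == 0 :> F) d.
Proof.
case: smithA => [[_ _ size_d _ sorted_d] _].
have [unitLF unitRF] := (intmx_unit F unitL, intmx_unit F unitR).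
rewrite intmx_Smith mxrankMfree ?row_free_unit // eqmxMfull ?row_full_unit //.
apply: rank_rect_diag_mx => [|i]; first by rewrite -size_d find_size.
rewrite (sorted_dvdz_find sorted_d) ?mulr0z // => x y /dvdzP [c ->] /eqP x0.
by rewrite rmorphM /= x0 mulr0.
Qed.

Lemma Smith_ppow_gcd_minors p : prime p ->
  ppow_factors p d <-> exists k : nat, gcd_minors A (int_rank A) = (p ^ k)%:Z.
Proof.
move=> p_prime; case: smithA => [[_ _ _ _ sorted_d] _].
rewrite (int_ppowP p_prime (gcd_minors_gt0 A)).
have rank_rat : int_rank A = find (fun x : int => x == 0) d.
  by rewrite /int_rank mxFE Smith_rank; apply: eq_find => x; rewrite intr_eq0.
have rank_Fq q : prime q -> \rank (intmx 'F_q A) = find (fun x => (q %| x)%Z) d.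
  move=> q_prime; rewrite Smith_rank; apply: eq_find => x.
  by rewrite /= (dvdz_pcharf (pchar_Fp q_prime)).
have coprime_factors q : prime q ->
    ~~ (q%:Z %| gcd_minors A (int_rank A))%Z <-> (forall x, x \in d -> x != 0 -> ~~ (q%:Z %| x)%Z).
  move=> q_prime; rewrite prime_dvd_gcd_minors // -leqNgt rank_Fq // rank_rat.
  exact: sorted_dvdz_find_dvd.
split=> [ppow_d q q_prime ne_qp | coprime_gcd delta delta_in nz_delta].
  apply/coprime_factors => // x x_in nz_x.
  exact: (int_ppowP p_prime (Smith_factor_gt0 x_in nz_x)).1 (ppow_d x x_in nz_x) q q_prime ne_qp.
apply/(int_ppowP p_prime (Smith_factor_gt0 delta_in nz_delta)) => q q_prime ne_qp.
exact: (coprime_factors q q_prime).1 (coprime_gcd q q_prime ne_qp) delta delta_in nz_delta.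
Qed.

End SmithDecomposition.

Lemma padic_ginverse_tr p m n (A : 'M[int]_(m, n)) B :
  padic_ginverse p A B -> padic_ginverse p A^T B^T.
Proof.
case=> padicB ginvB; split=> [i j | ]; first by rewrite mxE.
by rewrite !mxFE !intmx_tr -!trmx_mul mulmxA -!mxFE ginvB.
Qed.

Lemma padic_ginverse_generating p m n (A : 'M[int]_(m, n)) B :
  prime p -> padic_ginverse p A B -> cols_padic_generating p A.
Proof.
move=> p_prime [padicB ginvB] v [c defAc]; exists (B *m mxF v); split.
  by move=> j; apply: padic_mulmx => // a b; rewrite mxE; apply: padic_int.
by rewrite -defAc !mulmxA ginvB.
Qed.

Lemma padic_ginverse_pairs (F : numFieldType) p m n (A : 'M[int]_(m, n)) B :
  prime p -> padic_ginverse p A B -> padic_on_integral_pairs F p A.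
Proof.
move=> p_prime [padicB ginvB] x y int_yA int_Ax.
pose BF := map_mx (fun q : rat => ratr q : F) B.
have ginvBF : mxF A *m BF *m mxF A = mxF A.
  have mxF_ratr k l (M : 'M[int]_(k, l)) : mxF M = map_mx (fun q : rat => ratr q : F) (mxF M).
    by apply/matrixP => a b; rewrite !mxE rmorph_int.
  by rewrite mxF_ratr /BF -!map_mxM ginvB.
rewrite -ginvBF !mulmxA -(mulmxA _ (mxF A) x).
apply: padic_mulmx => // [a b | a b].
  apply: padic_mulmx => // [a' b' | a' b']; last by rewrite mxE; apply: padic_ratr.
  by rewrite (ord1 a'); have [z ->] := int_yA b'; apply: padic_int.
by rewrite (ord1 b); have [z ->] := int_Ax a; apply: padic_int.
Qed.

Theorem theorem1p3 (R : realType) (m n : nat) (A : 'M[int]_(m, n)) (p : nat) :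
  prime p ->
  let r := int_rank A in
  [<-> (* (1) *) cols_padic_generating p A;
       (* (2) *) cols_padic_generating p A^T;
       (* (3) *) (forall (x : 'cV[R]_n) (y : 'cV[R]_m),
                    (forall j, integral ((y^T *m mxF A) 0 j)) ->
                    (forall i, integral ((mxF A *m x) i 0)) ->
                    padic p ((y^T *m mxF A *m x) 0 0));
       (* (4) *) (forall L Rm d, Smith_decomp A L Rm d ->
                    forall delta, delta \in d -> delta != 0 ->
                    exists k : nat, delta = (p ^ k)%:Z);
       (* (5) *) (exists k : nat, gcd_minors A r = (p ^ k)%:Z);
       (* (6) *) (exists B : 'M[rat]_(n, m),
                    (forall i j, padic p (B i j)) /\ mxF A *m B *m mxF A = mxF A)].
Proof.
move=> p_prime r; have [L [U [d smithA]]] := Smith_decomp_exists A.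
have ginv_of_ppow ppow_d := ex_intro _ _ (padic_Smith_pinv smithA p_prime ppow_d).
tfae=> [genA | genAT | pairsA | ppowA | gcdA | [B ginvB]].
- have [B ginvB] := ginv_of_ppow (padic_generating_Smith_ppow smithA p_prime genA).
  exact: padic_ginverse_generating p_prime (padic_ginverse_tr ginvB).
- have smithAT := Smith_decomp_tr smithA.
  have [B ginvB] := ginv_of_ppow (padic_generating_Smith_ppow smithAT p_prime genAT).
  exact: padic_ginverse_pairs p_prime ginvB.
- move=> L' U' d' smithA'; exact: (padic_pairs_Smith_ppow (F := R) smithA' p_prime pairsA).
- exact/(Smith_ppow_gcd_minors smithA p_prime)/ppowA/smithA.
- exact/ginv_of_ppow/(Smith_ppow_gcd_minors smithA p_prime).
- exact: padic_ginverse_generating p_prime ginvB.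
Qed.
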